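(* Consider any instance of the rescheduling problem $(1, h_1 \mid \Delta_{\max}\le k \mid \sum_{j=1}^n w_j C_j)$ (i.e., $\mu=0$) described in the context, and suppose it admits a feasible schedule. Then there exists an optimal schedule $\sigma^*$ such that, if the earlier schedule of $\sigma^*$ contains an idle period, then $\Delta_{\max}(\sigma^* )=k$.
   Context: An instance consists of $n$ jobs $J_1,\dots,J_n$, where $J_j$ has a positive integer processing time $p_j$ and positive integer weight $w_j$, indexed so that $p_1/w_1\le\cdots\le p_n/w_n$; integers $0\le T_1<T_2$ (machine unavailable during $[T_1,T_2]$); an integer $k$. The original schedule $\pi^*$ processes $J_1,\dots,J_n$ in order consecutively from time $0$ without idling, so $S_j(\pi^* )=\sum_{i<j}p_i$, $C_j(\pi^* )=\sum_{i\le j}p_i$. A schedule $\sigma$ gives start times $S_j(\sigma)\ge0$, non-preemptive single-machine processing, $C_j(\sigma)=S_j(\sigma)+p_j$, no overlaps, and each job has $C_j(\sigma)\le T_1$ or $S_j(\sigma)\ge T_2$. $\Delta_j=|C_j(\sigma)-C_j(\pi^* )|$, $\Delta_{\max}=\max_j\Delta_j$. Feasible means $\Delta_{\max}\le k$; optimal means feasible and minimizing $\sum_j w_jC_j(\sigma)$. The earlier schedule consists of jobs with $C_j(\sigma)\le T_1$. An idle period of the earlier schedule is a maximal time interval of positive length within $[0,c]$, where $c$ is the largest completion time of an earlier-schedule job, during which no job is processed. Standing assumptions: some job has $C_j(\pi^* )>T_1$; with $j_1$ the smallest such index, $\min_jp_j\le T_1<\sum_jp_j$ and $T_2-S_{j_1}(\pi^*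 )\le k$. *)

From HB Require Import structures.
From mathcomp Require Import all_boot all_order all_algebra.
From mathcomp Require Import reals.
Set Implicit Arguments. Unset Strict Implicit. Unset Printing Implicit Defensive.
Import Order.TTheory GRing.Theory Num.Theory.
Local Open Scope ring_scope.

Section Resched.
Variables (R : realType) (n : nat) (p w : 'I_n -> nat).

(* original schedule pi*: jobs processed in index order from time 0 *)
Definition Spi (j : 'I_n) : nat := (\sum_(i < n | (i < j)%N) p i)%N.
Definition Cpi (j : 'I_n) : nat := (Spi j + p j)%N.

Definition Cs (S : 'I_n -> R) (j : 'I_n) : R := S j + (p j)%:R.

(* valid schedule with machine unavailable during [T1, T2] *)
Definition valid_schedule (T1 T2 : nat) (S : 'I_n -> R) : Prop :=
  (forall j, 0 <= S j) /\
  (forall i j, i != j -> Cs S i <= S j \/ Cs S j <= S i) /\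
  (forall j, Cs S j <= T1%:R \/ T2%:R <= S j).

Definition Delta (S : 'I_n -> R) (j : 'I_n) : R := `|Cs S j - (Cpi j)%:R|.

Definition Dmax (S : 'I_n -> R) : R := \big[Num.max/0]_(j < n) Delta S j.

Definition feasible (T1 T2 : nat) (k : int) (S : 'I_n -> R) : Prop :=
  valid_schedule T1 T2 S /\ Dmax S <= k%:~R.

Definition objective (S : 'I_n -> R) : R := \sum_(j < n) (w j)%:R * Cs S j.

Definition optimal (T1 T2 : nat) (k : int) (S : 'I_n -> R) : Prop :=
  feasible T1 T2 k S /\
  forall S', feasible T1 T2 k S' -> objective S <= objective S'.

(* largest completion time among jobs of the earlier schedule (0 if none) *)
Definition c_earlier (T1 : nat) (S : 'I_n -> R) : R :=
  \big[Num.max/0]_(j < n | Cs S j <= T1%:R) Cs S j.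

Definition no_processing (S : 'I_n -> R) (a b : R) : Prop :=
  forall t, a < t -> t < b -> forall j, ~ (S j < t /\ t < Cs S j).

Definition idle_period (T1 : nat) (S : 'I_n -> R) (a b : R) : Prop :=
  [/\ a < b, 0 <= a, b <= c_earlier T1 S, no_processing S a b &
      forall a' b', a' <= a -> b <= b' -> 0 <= a' -> b' <= c_earlier T1 S ->
        no_processing S a' b' -> a' = a /\ b' = b].

Definition has_idle_period (T1 : nat) (S : 'I_n -> R) : Prop :=
  exists a b, idle_period T1 S a b.

End Resched.

(* Rounding every start time down to an integer keeps a schedule feasible and
   does not increase the weighted completion time, so an optimal schedule
   exists: take an integral feasible schedule of least (natural-valued)
   objective.  If an optimal schedule has an idle period (a, b) in its earlier
   schedule and Dmax < k, then moving every earlier job that starts after b to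
   the left by min (b - a, k - Dmax) keeps it feasible and strictly decreases
   the objective, because some earlier job completes after b. *)
From HB Require Import structures.
From mathcomp Require Import all_boot all_order all_algebra.
From mathcomp Require Import reals.
From mathcomp Require Import zify lra.
From Stdlib Require Import Classical Wf_nat.
Import Order.TTheory GRing.Theory Num.Theory.
Local Open Scope ring_scope.

Section Rescheduling.
Context {R : realType} {n : nat} (p w : 'I_n -> nat).
Implicit Types (S : 'I_n -> R) (T : nat) (k : int).

Lemma Dmax_ge0 S : 0 <= Dmax p S.
Proof.
rewrite /Dmax; elim/big_ind: _ => // [x y x0 _|j _]; last exact: normr_ge0.
by rewrite le_max x0.
Qed.

Lemma Delta_le_Dmax S j : Delta p S j <= Dmax p S.
Proof. by rewrite /Dmax (bigD1 j) //= le_max lexx. Qed.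

Lemma Dmax_le S x : 0 <= x -> (forall j, Delta p S j <= x) -> Dmax p S <= x.
Proof.
move=> x0 Hx; rewrite /Dmax; elim/big_ind: _ => // a b.
by rewrite ge_max => -> ->.
Qed.

Lemma c_earlier_witness T1 S b : 0 < b -> b <= c_earlier p T1 S ->
  exists2 j, Cs p S j <= T1%:R & b <= Cs p S j.
Proof.
move=> b0 bc; apply: NNPP => no_witness; move: bc; apply/negP; rewrite -ltNge.
rewrite /c_earlier; elim/big_ind: _ => // [x y|j jT]; first by rewrite gt_max => -> ->.
by rewrite ltNge; apply/negP => bj; apply: no_witness; exists j.
Qed.

Definition trunc_schedule S j : R := (Num.truncn (S j))%:R.

Lemma int_le_truncn (x : R) (m : int) :
  0 <= x -> m%:~R <= x -> m%:~R <= (Num.truncn x)%:R :> R.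
Proof.
move=> x0 mx; have /andP[_ xS] := truncn_itv x0.
have : m%:~R < (Num.truncn x).+1%:Z%:~R :> R by exact: le_lt_trans mx xS.
rewrite ltr_int => lt_m.
have le_m : (m <= (Num.truncn x)%:Z)%R by lia.
by rewrite -(ler_int R) in le_m.
Qed.

Lemma Delta_trunc_schedule_le S j (d : int) : 0 <= S j ->
  Delta p S j <= d%:~R -> Delta p (trunc_schedule S) j <= d%:~R.
Proof.
move=> Sj0; rewrite /Delta /Cs /trunc_schedule !ler_norml => /andP[lo hi].
have := @int_le_truncn (S j) ((Cpi p j)%:Z - (p j)%:Z - d) Sj0.
rewrite !intrD !intrN /= -!pmulrn => tr_lo.
have := truncn_le (S j); rewrite Sj0 => tr_le.
by apply/andP; split; [have := tr_lo ltac:(lra)|]; lra.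
Qed.

Lemma trunc_schedule_feasible T1 T2 k S :
  feasible p T1 T2 k S -> feasible p T1 T2 k (trunc_schedule S).
Proof.
move=> [[S0 [Sdisj Sside]] SD].
have itv j := truncn_itv (S0 j).
have ge_trunc j (m : nat) : m%:R <= S j -> (m <= Num.truncn (S j))%N.
  by rewrite truncn_ge_nat.
split; [split; [|split]|]; rewrite /Cs /trunc_schedule.
- by move=> j; rewrite ler0n.
- move=> i j /Sdisj; rewrite /Cs => -[h|h]; [left|right];
    rewrite -natrD ler_nat ge_trunc // natrD;
    move: (itv i) (itv j) => /andP[? ?] /andP[? ?]; lra.
- move=> j; case: (Sside j); rewrite /Cs => h; [left|right];
    last by rewrite ler_nat ge_trunc.
  by move: (itv j) => /andP[? ?]; lra.
- apply: Dmax_le => [|j]; first exact: le_trans (Dmax_ge0 S) SD.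
  exact/Delta_trunc_schedule_le/(le_trans (Delta_le_Dmax S j) SD).
Qed.

Lemma objective_trunc_schedule_le S :
  (forall j, 0 <= S j) -> objective p w (trunc_schedule S) <= objective p w S.
Proof.
move=> S0; apply: ler_sum => j _; apply: ler_wpM2l; first exact: ler0n.
by rewrite /Cs /trunc_schedule lerD2r truncn_le.
Qed.

Lemma objective_trunc_scheduleE S : objective p w (trunc_schedule S) =
  (\sum_(j < n) w j * (Num.truncn (S j) + p j))%N%:R.
Proof.
by rewrite /objective natr_sum; apply: eq_bigr => j _; rewrite natrM natrD.
Qed.

Lemma exists_optimal T1 T2 k : (exists S, feasible p T1 T2 k S) ->
  exists S, optimal p w T1 T2 k S.
Proof.
move=> [S0 fS0].
pose attained m := exists2 S, feasible p T1 T2 k S &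
  objective p w (trunc_schedule S) = m%:R.
have [m [[[S fS] Sm] m_least] _] :=
  dec_inh_nat_subset_has_unique_least_element attained (fun m => classic (attained m))
    (ex_intro attained _ (ex_intro2 _ _ S0 fS0 (objective_trunc_scheduleE S0))).
exists (trunc_schedule S); split; first exact: trunc_schedule_feasible.
move=> S' fS'; have [[S'0 _] _] := fS'.
apply: (le_trans _ (objective_trunc_schedule_le S' S'0)).
rewrite Sm objective_trunc_scheduleE ler_nat; apply/ssrnat.leP; apply: m_least.
by exists S'; last exact: objective_trunc_scheduleE.
Qed.

Lemma idle_gap_split S a b : (forall j, (0 < p j)%N) -> a < b ->
  no_processing p S a b -> forall j, Cs p S j <= a \/ b <= S j.
Proof.
move=> p_gt0 ab gap j; case: (lerP (Cs p S j) a) => [|aC]; [by left|right].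
rewrite leNgt; apply/negP => Sb.
have pj : 0 < (p j)%:R :> R by rewrite ltr0n.
pose u := Num.max a (S j); pose v := Num.min b (Cs p S j).
have uv : u < v by rewrite gt_max !lt_min ab aC Sb /Cs /=; lra.
have [au Su] : a <= u /\ S j <= u by rewrite !le_max !lexx ?orbT.
have [vb vC] : v <= b /\ v <= Cs p S j by rewrite !ge_min !lexx ?orbT.
by apply: (gap ((u + v) / 2) _ _ j); [lra | lra | split; lra].
Qed.

Definition moved_earlier T (b : R) S j : bool := (b <= S j) && (Cs p S j <= T%:R).

Definition shift_earlier T (b eps : R) S j : R :=
  if moved_earlier T b S j then S j - eps else S j.

Lemma shift_earlier_valid T1 T2 a b eps S : (T1 <= T2)%N -> 0 <= a ->
  0 <= eps <= b - a -> valid_schedule p T1 T2 S ->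
  (forall j, Cs p S j <= a \/ b <= S j) ->
  valid_schedule p T1 T2 (shift_earlier T1 b eps S).
Proof.
move=> T12 a0 /andP[eps0 eps_gap] [S0 [Sdisj Sside]] Ssplit.
have T12R : T1%:R <= T2%:R :> R by rewrite ler_nat.
have mixed i j : moved_earlier T1 b S i -> ~~ moved_earlier T1 b S j ->
    Cs p S i - eps <= S j \/ Cs p S j <= S i - eps.
  move=> /andP[bi iT] jfix; case: (Ssplit j) => [ja|bj]; first by right; lra.
  case: (Sside j) => [jT|T2j]; last by left; lra.
  by move: jfix; rewrite /moved_earlier bj jT.
rewrite /valid_schedule /shift_earlier /Cs; split; [|split].
- move=> j; case: ifP => [/andP[bj _]|_]; [lra | exact: S0].
- move=> i j ij; move: (Sdisj i j ij) (mixed i j) (mixed j i); rewrite /Cs.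
  case: (moved_earlier T1 b S i); case: (moved_earlier T1 b S j) => /= disj mij mji.
  + by case: disj => ?; [left|right]; lra.
  + by case: (mij erefl erefl) => ?; [left|right]; lra.
  + by case: (mji erefl erefl) => ?; [right|left]; lra.
  + exact: disj.
- move=> j; case: ifP => [/andP[_ jT]|_]; last exact: Sside.
  by left; rewrite /Cs in jT; lra.
Qed.

Lemma Delta_shift_earlier_le T1 b eps S j :
  0 <= eps -> Delta p (shift_earlier T1 b eps S) j <= Delta p S j + eps.
Proof.
move=> eps0; rewrite /Delta /Cs /shift_earlier; case: ifP => _; last by rewrite lerDl.
have -> : S j - eps + (p j)%:R - (Cpi p j)%:R = S j + (p j)%:R - (Cpi p j)%:R - eps.
  by lra.
by apply: le_trans (ler_normB _ _) _; rewrite (ger0_norm eps0).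
Qed.

Lemma objective_shift_earlier_lt T1 b eps S : (forall j, (0 < w j)%N) -> 0 < eps ->
  (exists j, moved_earlier T1 b S j) ->
  objective p w (shift_earlier T1 b eps S) < objective p w S.
Proof.
move=> w_gt0 eps0 [j0 moved_j0].
rewrite /objective (bigD1 j0) //= [X in _ < X](bigD1 j0) //=.
apply: ltr_leD.
  by rewrite ltr_pM2l ?ltr0n // /Cs /shift_earlier moved_j0 ltrD2r gtrBl.
apply: ler_sum => i _; apply: ler_wpM2l; first exact: ler0n.
by rewrite /Cs /shift_earlier; case: ifP => _ //; rewrite lerD2r gerBl ltW.
Qed.

Lemma optimal_idle_Dmax T1 T2 k S :
  (forall j, (0 < p j)%N) -> (forall j, (0 < w j)%N) -> (T1 <= T2)%N ->
  optimal p w T1 T2 k S -> has_idle_period p T1 S -> Dmax p S = k%:~R.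
Proof.
move=> p_gt0 w_gt0 T12 [[vS SD] S_opt] [a [b [ab a0 bc gap _]]].
apply/eqP; rewrite eq_le SD /= leNgt; apply/negP => D_lt_k.
have Ssplit := idle_gap_split S a b p_gt0 ab gap.
have [j0 j0T bj0] := c_earlier_witness T1 S b (le_lt_trans a0 ab) bc.
have bSj0 : b <= S j0 by case: (Ssplit j0) => //; lra.
pose eps := Num.min (b - a) (k%:~R - Dmax p S).
have eps0 : 0 < eps by rewrite lt_min !subr_gt0 ab D_lt_k.
have [eps_gap eps_slack] : eps <= b - a /\ eps <= k%:~R - Dmax p S.
  by rewrite !ge_min !lexx ?orbT.
have shift_feasible : feasible p T1 T2 k (shift_earlier T1 b eps S).
  split.
    by apply: (shift_earlier_valid _ _ _ _ _ _ T12 a0 _ vS Ssplit); rewrite ltW.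
  apply: Dmax_le => [|j]; first by have := Dmax_ge0 S; lra.
  have := Delta_shift_earlier_le T1 b _ S j (ltW eps0).
  by have := Delta_le_Dmax S j; lra.
have := S_opt _ shift_feasible; apply/negP; rewrite -ltNge.
by apply: objective_shift_earlier_lt => //; exists j0; apply/andP.
Qed.

End Rescheduling.

Theorem lemma6 (R : realType) (n : nat) (p w : 'I_n -> nat)
    (T1 T2 : nat) (k : int)
    (hp : forall j, (0 < p j)%N) (hw : forall j, (0 < w j)%N)
    (hsort : forall i j : 'I_n, (i <= j)%N -> (p i * w j <= p j * w i)%N)
    (hT : (T1 < T2)%N)
    (hcross : exists j, (T1 < Cpi p j)%N)
    (hminp : exists j, (p j <= T1)%N)
    (hsum : (T1 < \sum_(j < n) p j)%N)
    (hj1 : forall j1 : 'I_n, (T1 < Cpi p j1)%N ->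
             (forall i : 'I_n, (T1 < Cpi p i)%N -> (j1 <= i)%N) ->
             (T2%:Z - (Spi p j1)%:Z <= k)%R)
    (hfeas : exists S : 'I_n -> R, feasible p T1 T2 k S) :
  exists S : 'I_n -> R, optimal p w T1 T2 k S /\
    (has_idle_period p T1 S -> Dmax p S = k%:~R).
Proof.
have [S S_opt] := exists_optimal p w _ _ _ hfeas.
exists S; split=> //.
exact: (optimal_idle_Dmax p w _ _ _ _ hp hw (ltnW hT) S_opt).
Qed.
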